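(* Let $M\subseteq N$ be models of $\mathrm{AA}_0$ such that $N$ is a cofinal extension of $M$ and $M\preccurlyeq_{\Sigma_0}N$. If $M$ and $N$ satisfy the collection axioms, then $M\preccurlyeq N$.
   Context: Structures are complete metric spaces of diameter at most $1$ in $L=\{+,\cdot,\wedge,\vee,0,1\}$ (operations $1$-Lipschitz, $d$ the only relation symbol); affine formulas are built from $1$ and $d(t_1,t_2)$ using $+$, real scalar multiples, $\sup$, $\inf$. $|x|=d(x,0)$; $x\le y$ means $x\wedge y=x$; $nx$, $x^n$ iterated sum/product. $\mathrm{AA}_0$ consists of (universally quantified): (A1) the identities of the nonnegative part of a lattice-ordered commutative ring with identity (commutative semiring axioms, lattice axioms, distributivity of $+,\cdot$ over $\wedge,\vee$, $0\le x$); (A2) $\inf_y d(x,(x\wedge y)+1)=1-|x|$ and $x\le x^2$; (A3) $d(x+z,y+z)=d(x,y)$; (A4) $d(y,z)\le d(xy,xz)+1-|x|$; (A5) $d(xy,xz)=d(x^ny,x^nz)\le d(y,z)$; (A6) $d(nx,ny)=d(x^n,y^n)=d(x,y)$, $n\ge1$; (A7) $|x\wedge y|+|x\vee y|=|x|+|y|$; (A8) $|xy+z|=|(x\wedge y)+z|$; (A9) $|x+y+z|=|(x\vee y)+z|$; (A10) $\inf_t d((x\wedge y)+t,y)=0$. Bounded quantifiers: $\sup_{x\le t}\phi(x):=\sup_x\phi(x\wedge t)$, $\inf_{x\le t}\phi(x):=\inf_x\phi(x\wedge t)$ ($t$ a term without $x$); $\Sigma_0$ formulas are affine formulas with only bounded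 quantifiers. $M\preccurlyeq_{\Sigma_0}N$ means $\phi^M(\bar a)=\phi^N(\bar a)$ for all $\Sigma_0$ formulas $\phi$ and $\bar a\in M$; $M\preccurlyeq N$ means this for all affine formulas. $N$ is a cofinal extension of $M$ if $M\subseteq N$ is a substructure and every $x\in N$ satisfies $x\le y$ for some $y\in M$. The collection axioms are, for every affine formula $\phi(x,\bar y,\bar z)$, the universal closures of $\inf_{x\le t}\sup_{\bar y}\phi(x,\bar y,\bar z)=\sup_s\inf_{x\le t}\sup_{\bar y\le s}\phi(x,\bar y,\bar z)$. *)

From Stdlib Require Import Reals List Bool Arith.
From Coquelicot Require Import Coquelicot.
Open Scope R_scope.

Record LStr := {
  car :> Type;
  dist : car -> car -> R;
  s_add : car -> car -> car;
  s_mul : car -> car -> car;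
  s_meet : car -> car -> car;
  s_join : car -> car -> car;
  s_zero : car;
  s_one : car;
  dist_eq0 : forall x y, dist x y = 0 <-> x = y;
  dist_sym : forall x y, dist x y = dist y x;
  dist_tri : forall x y z, dist x z <= dist x y + dist y z;
  dist_le1 : forall x y, dist x y <= 1;
  dist_complete : forall u : nat -> car,
    (forall eps, 0 < eps -> exists n0, forall m n, (n0 <= m)%nat -> (n0 <= n)%nat ->
        dist (u m) (u n) < eps) ->
    exists l, forall eps, 0 < eps -> exists n0, forall n, (n0 <= n)%nat -> dist (u n) l < eps;
  lip_add : forall x x' y y', dist (s_add x y) (s_add x' y) <= dist x x' /\
                              dist (s_add x y) (s_add x y') <= dist y y';
  lip_mul : forall x x' y y', dist (s_mul x y) (s_mul x' y) <= dist x x' /\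
                              dist (s_mul x y) (s_mul x y') <= dist y y';
  lip_meet : forall x x' y y', dist (s_meet x y) (s_meet x' y) <= dist x x' /\
                               dist (s_meet x y) (s_meet x y') <= dist y y';
  lip_join : forall x x' y y', dist (s_join x y) (s_join x' y) <= dist x x' /\
                               dist (s_join x y) (s_join x y') <= dist y y'
}.

Arguments dist {_}. Arguments s_add {_}. Arguments s_mul {_}.
Arguments s_meet {_}. Arguments s_join {_}. Arguments s_zero {_}. Arguments s_one {_}.

(** Supremum / infimum of a real function on a carrier (only applied to bounded
    functions, where this is the genuine sup / inf). *)
Definition Sup {T : Type} (f : T -> R) : R := real (Lub_Rbar (fun r => exists a, r = f a)).
Definition Inf {T : Type} (f : T -> R) : R := - Sup (fun a => - f a).

Inductive term :=
| tvar (n : nat) | tzero | tone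
| tadd (t u : term) | tmul (t u : term) | tmeet (t u : term) | tjoin (t u : term).

(** Formulas.  [fbsup x t phi] / [fbinf x t phi] are the bounded quantifiers
    sup_{x <= t} phi := sup_x phi(x meet t), inf_{x <= t} phi := inf_x phi(x meet t),
    taken as primitive abbreviations (their semantics below is literally that of
    sup_x phi(x meet t) for t not containing x). *)
Inductive formula :=
| fone
| fdist (t u : term)
| fplus (phi psi : formula)
| fscale (r : R) (phi : formula)
| fsup (x : nat) (phi : formula)
| finf (x : nat) (phi : formula)
| fbsup (x : nat) (t : term) (phi : formula)
| fbinf (x : nat) (t : term) (phi : formula).

Fixpoint t_occ (x : nat) (t : term) : bool :=
  match t with
  | tvar n => Nat.eqb n x
  | tzero | tone => false
  | tadd a b | tmul a b | tmeet a b | tjoin a b => t_occ x a || t_occ x b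
  end.

Fixpoint f_occ (x : nat) (phi : formula) : bool :=
  match phi with
  | fone => false
  | fdist t u => t_occ x t || t_occ x u
  | fplus a b => f_occ x a || f_occ x b
  | fscale _ a => f_occ x a
  | fsup y a | finf y a => negb (Nat.eqb x y) && f_occ x a
  | fbsup y t a | fbinf y t a => t_occ x t || (negb (Nat.eqb x y) && f_occ x a)
  end.

Fixpoint is_affine (phi : formula) : bool :=
  match phi with
  | fone | fdist _ _ => true
  | fplus a b => is_affine a && is_affine b
  | fscale _ a => is_affine a
  | fsup _ a | finf _ a => is_affine a
  | fbsup _ _ _ | fbinf _ _ _ => false
  end.

Fixpoint is_Sigma0 (phi : formula) : bool :=
  match phi with
  | fone | fdist _ _ => true
  | fplus a b => is_Sigma0 a && is_Sigma0 b
  | fscale _ a => is_Sigma0 a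
  | fsup _ _ | finf _ _ => false
  | fbsup x t a | fbinf x t a => negb (t_occ x t) && is_Sigma0 a
  end.

Section Sem.
Variable M : LStr.
Implicit Types x y z t : car M.

Definition upd (rho : nat -> M) (x : nat) (a : M) : nat -> M :=
  fun n => if Nat.eqb n x then a else rho n.

Fixpoint teval (rho : nat -> M) (t : term) : M :=
  match t with
  | tvar n => rho n
  | tzero => s_zero
  | tone => s_one
  | tadd a b => s_add (teval rho a) (teval rho b)
  | tmul a b => s_mul (teval rho a) (teval rho b)
  | tmeet a b => s_meet (teval rho a) (teval rho b)
  | tjoin a b => s_join (teval rho a) (teval rho b)
  end.

Fixpoint feval (rho : nat -> M) (phi : formula) : R :=
  match phi with
  | fone => 1
  | fdist t u => dist (teval rho t) (teval rho u)
  | fplus a b => feval rho a + feval rho b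
  | fscale r a => r * feval rho a
  | fsup x a => Sup (fun c : M => feval (upd rho x c) a)
  | finf x a => Inf (fun c : M => feval (upd rho x c) a)
  | fbsup x t a => Sup (fun c : M => feval (upd rho x (s_meet c (teval rho t))) a)
  | fbinf x t a => Inf (fun c : M => feval (upd rho x (s_meet c (teval rho t))) a)
  end.

Definition le (x y : M) : Prop := s_meet x y = x.
Definition nrm (x : M) : R := dist x s_zero.
Fixpoint nsum (n : nat) (x : M) : M :=
  match n with O => s_zero | S O => x | S m => s_add (nsum m x) x end.
Fixpoint npow (n : nat) (x : M) : M :=
  match n with O => s_one | S O => x | S m => s_mul (npow m x) x end.

Record AA0 : Prop := {
  (* A1: identities of the nonnegative part of a lattice-ordered commutative ring with 1 *)
  A1_add_assoc : forall x y z, s_add x (s_add y z) = s_add (s_add x y) z;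
  A1_add_comm : forall x y, s_add x y = s_add y x;
  A1_add_0 : forall x, s_add x s_zero = x;
  A1_mul_assoc : forall x y z, s_mul x (s_mul y z) = s_mul (s_mul x y) z;
  A1_mul_comm : forall x y, s_mul x y = s_mul y x;
  A1_mul_1 : forall x, s_mul x s_one = x;
  A1_mul_0 : forall x, s_mul x s_zero = s_zero;
  A1_mul_add : forall x y z, s_mul x (s_add y z) = s_add (s_mul x y) (s_mul x z);
  A1_meet_assoc : forall x y z, s_meet x (s_meet y z) = s_meet (s_meet x y) z;
  A1_meet_comm : forall x y, s_meet x y = s_meet y x;
  A1_join_assoc : forall x y z, s_join x (s_join y z) = s_join (s_join x y) z;
  A1_join_comm : forall x y, s_join x y = s_join y x;
  A1_meet_idem : forall x, s_meet x x = x;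
  A1_join_idem : forall x, s_join x x = x;
  A1_absorb1 : forall x y, s_meet x (s_join x y) = x;
  A1_absorb2 : forall x y, s_join x (s_meet x y) = x;
  A1_add_meet : forall x y z, s_add x (s_meet y z) = s_meet (s_add x y) (s_add x z);
  A1_add_join : forall x y z, s_add x (s_join y z) = s_join (s_add x y) (s_add x z);
  A1_mul_meet : forall x y z, s_mul x (s_meet y z) = s_meet (s_mul x y) (s_mul x z);
  A1_mul_join : forall x y z, s_mul x (s_join y z) = s_join (s_mul x y) (s_mul x z);
  A1_nonneg : forall x, le s_zero x;
  A2a : forall x, Inf (fun y => dist x (s_add (s_meet x y) s_one)) = 1 - nrm x;
  A2b : forall x, le x (s_mul x x);
  A3 : forall x y z, dist (s_add x z) (s_add y z) = dist x y;
  A4 : forall x y z, dist y z <= dist (s_mul x y) (s_mul x z) + 1 - nrm x;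
  A5 : forall n x y z, (1 <= n)%nat ->
         dist (s_mul x y) (s_mul x z) = dist (s_mul (npow n x) y) (s_mul (npow n x) z) /\
         dist (s_mul (npow n x) y) (s_mul (npow n x) z) <= dist y z;
  A6 : forall n x y, (1 <= n)%nat ->
         dist (nsum n x) (nsum n y) = dist x y /\ dist (npow n x) (npow n y) = dist x y;
  A7 : forall x y, nrm (s_meet x y) + nrm (s_join x y) = nrm x + nrm y;
  A8 : forall x y z, nrm (s_add (s_mul x y) z) = nrm (s_add (s_meet x y) z);
  A9 : forall x y z, nrm (s_add (s_add x y) z) = nrm (s_add (s_join x y) z);
  A10 : forall x y, Inf (fun t => dist (s_add (s_meet x y) t) y) = 0
}.

Definition coll_lhs (x t : nat) (ys : list nat) (phi : formula) : formula :=
  fbinf x (tvar t) (fold_right (fun (y : nat) (acc : formula) => fsup y acc) phi ys).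
Definition coll_rhs (x t s : nat) (ys : list nat) (phi : formula) : formula :=
  fsup s (fbinf x (tvar t) (fold_right (fun (y : nat) (acc : formula) => fbsup y (tvar s) acc) phi ys)).

Definition Collection : Prop :=
  forall (phi : formula) (x t s : nat) (ys : list nat),
    is_affine phi = true -> NoDup (x :: t :: s :: ys) ->
    f_occ t phi = false -> f_occ s phi = false ->
    forall rho : nat -> M, feval rho (coll_lhs x t ys phi) = feval rho (coll_rhs x t s ys phi).

End Sem.

Arguments upd {M}. Arguments feval {M}. Arguments teval {M}.

Record Embedding (M N : LStr) := {
  emb :> M -> N;
  emb_dist : forall x y, dist (emb x) (emb y) = dist x y;
  emb_add : forall x y, emb (s_add x y) = s_add (emb x) (emb y);
  emb_mul : forall x y, emb (s_mul x y) = s_mul (emb x) (emb y);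
  emb_meet : forall x y, emb (s_meet x y) = s_meet (emb x) (emb y);
  emb_join : forall x y, emb (s_join x y) = s_join (emb x) (emb y);
  emb_zero : emb s_zero = s_zero;
  emb_one : emb s_one = s_one
}.
Arguments emb {M N}.

Definition Cofinal {M N : LStr} (e : Embedding M N) : Prop :=
  forall y : N, exists x : M, le N y (e x).

Definition Sigma0_elementary {M N : LStr} (e : Embedding M N) : Prop :=
  forall phi, is_Sigma0 phi = true ->
    forall rho : nat -> M, feval rho phi = feval (fun n => e (rho n)) phi.

Definition Elementary {M N : LStr} (e : Embedding M N) : Prop :=
  forall phi, is_affine phi = true ->
    forall rho : nat -> M, feval rho phi = feval (fun n => e (rho n)) phi.

(* In models of AA_0 with collection, every affine formula is equivalent to one and the same
   prenex formula Q_1 v_1 ... Q_k v_k. theta with theta Sigma_0 and monotone in each v_i: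
   nondecreasing where Q_i = sup, nonincreasing where Q_i = inf.  Sums and scalings are prenexed directly; sup_y phi is rewritten as
   sup_s sup_{y <= s} phi, and the bounded sup_{y <= s} is pushed through the prefix of phi.
   It commutes with sup trivially and with inf by collection, because monotonicity makes the
   bounded sup in the collection axiom attained at its bound; the matrix stays Sigma_0 and is
   nondecreasing in the new variable s.
   In a cofinal extension every element of N lies below one of M, so by monotonicity each
   quantifier of the prenex form takes the same value over N as over M, and
   Sigma_0-elementarity handles theta. *)

From Pilot Require Import Defs.
From Stdlib Require Import Reals List Lra Lia FunctionalExtensionality Bool.
From Coquelicot Require Import Coquelicot.
Import Defs.
Open Scope R_scope.

Section SupInf.
Context {T : Type}.
Implicit Types (f g : T -> R).

Lemma Sup_is_lub f (c0 : T) B : (forall c, f c <= B) ->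
  is_lub_Rbar (fun r => exists a, r = f a) (Sup f).
Proof.
  intros HB. unfold Sup.
  destruct (Lub_Rbar_correct (fun r => exists a, r = f a)) as [Hub Hlub].
  assert (Hlo : Rbar_le (f c0) (Lub_Rbar (fun r => exists a, r = f a)))
    by (apply Hub; now exists c0).
  assert (Hhi : Rbar_le (Lub_Rbar (fun r => exists a, r = f a)) B)
    by (apply Hlub; intros x [a ->]; apply HB).
  destruct (Lub_Rbar _); try contradiction. now split.
Qed.

Lemma Sup_ub f B c : (forall c, f c <= B) -> f c <= Sup f.
Proof. intros HB. apply (proj1 (Sup_is_lub f c B HB)). now exists c. Qed.

Lemma Sup_lub f (c0 : T) b : (forall c, f c <= b) -> Sup f <= b.
Proof.
  intros Hb. apply (proj2 (Sup_is_lub f c0 b Hb) (Finite b)). intros x [a ->]. apply Hb.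
Qed.

Lemma Inf_lb f B c : (forall c, B <= f c) -> Inf f <= f c.
Proof.
  intros HB. unfold Inf.
  enough (- f c <= Sup (fun a => - f a)) by lra.
  apply (Sup_ub (fun a => - f a) (- B)). intros x. specialize (HB x). lra.
Qed.

Lemma Inf_glb f (c0 : T) b : (forall c, b <= f c) -> b <= Inf f.
Proof.
  intros Hb. unfold Inf.
  enough (Sup (fun a => - f a) <= - b) by lra.
  apply (Sup_lub _ c0). intros c. specialize (Hb c). lra.
Qed.

Lemma Sup_ext f g : (forall c, f c = g c) -> Sup f = Sup g.
Proof. intros H. now rewrite (functional_extensionality f g H). Qed.

Lemma Inf_ext f g : (forall c, f c = g c) -> Inf f = Inf g.
Proof. intros H. now rewrite (functional_extensionality f g H). Qed.

Lemma Sup_attained f c0 : (forall c, f c <= f c0) -> Sup f = f c0.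
Proof.
  intros H. apply Rle_antisym; [now apply (Sup_lub _ c0)|]. now apply (Sup_ub _ (f c0)).
Qed.

Lemma Sup_le f g (c0 : T) B : (forall c, g c <= B) -> (forall c, f c <= g c) -> Sup f <= Sup g.
Proof.
  intros HB H. apply (Sup_lub _ c0). intros c.
  eapply Rle_trans; [apply H|]. now apply (Sup_ub _ B).
Qed.

Lemma Inf_le f g (c0 : T) B : (forall c, B <= f c) -> (forall c, f c <= g c) -> Inf f <= Inf g.
Proof.
  intros HB H. apply (Inf_glb _ c0). intros c.
  eapply Rle_trans; [|apply H]. now apply (Inf_lb _ B).
Qed.

Lemma Sup_abs f (c0 : T) B : (forall c, Rabs (f c) <= B) -> Rabs (Sup f) <= B.
Proof.
  intros H. assert (Hf : forall c, - B <= f c <= B) by (intros c; now apply Rabs_le_between).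
  pose proof (Sup_lub f c0 B ltac:(intros c; apply Hf)).
  pose proof (Sup_ub f B c0 ltac:(intros c; apply Hf)).
  specialize (Hf c0). apply Rabs_le_between. lra.
Qed.

Lemma Inf_abs f (c0 : T) B : (forall c, Rabs (f c) <= B) -> Rabs (Inf f) <= B.
Proof.
  intros H. unfold Inf. rewrite Rabs_Ropp. apply (Sup_abs _ c0).
  intros c. rewrite Rabs_Ropp. auto.
Qed.

Lemma Sup_plus_r f (c0 : T) B k : (forall c, f c <= B) -> Sup (fun c => f c + k) = Sup f + k.
Proof.
  intros HB. apply Rle_antisym.
  - apply (Sup_lub _ c0). intros c. pose proof (Sup_ub f B c HB). lra.
  - enough (Sup f <= Sup (fun c => f c + k) - k) by lra.
    apply (Sup_lub _ c0). intros c.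
    enough (f c + k <= Sup (fun c => f c + k)) by lra.
    apply (Sup_ub (fun c => f c + k) (B + k)). intros x. specialize (HB x). cbv beta. lra.
Qed.

Lemma Inf_plus_r f (c0 : T) B k : (forall c, B <= f c) -> Inf (fun c => f c + k) = Inf f + k.
Proof.
  intros HB. unfold Inf.
  rewrite (Sup_ext _ (fun a => - f a + - k)) by (intros; ring).
  rewrite (Sup_plus_r _ c0 (- B)) by (intros x; specialize (HB x); lra). ring.
Qed.

Lemma Sup_scale f (c0 : T) B r : 0 <= r -> (forall c, f c <= B) ->
  r * Sup f = Sup (fun c => r * f c).
Proof.
  intros Hr HB. destruct (Req_dec r 0) as [->|Hr0].
  { rewrite (Sup_attained (fun c => 0 * f c) c0) by (intros; lra). ring. }
  assert (Hrf : forall c, r * f c <= r * B) by (intros c; specialize (HB c); nra).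
  apply Rle_antisym.
  - enough (Sup f <= Sup (fun c => r * f c) / r) as HS.
    { apply Rmult_le_compat_l with (r := r) in HS; [|lra]. field_simplify in HS; lra. }
    apply (Sup_lub _ c0). intros c.
    pose proof (Sup_ub (fun c => r * f c) (r * B) c Hrf).
    apply Rmult_le_reg_l with r; [lra|]. field_simplify; lra.
  - apply (Sup_lub _ c0). intros c. pose proof (Sup_ub f B c HB). nra.
Qed.

Lemma Inf_scale f (c0 : T) B r : 0 <= r -> (forall c, B <= f c) ->
  r * Inf f = Inf (fun c => r * f c).
Proof.
  intros Hr HB. unfold Inf.
  rewrite (Sup_ext (fun a => - (r * f a)) (fun a => r * - f a)) by (intros; ring).
  rewrite <- (Sup_scale _ c0 (- B)) by (auto; intros x; specialize (HB x); lra). ring.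
Qed.

Lemma Sup_scale_neg f (c0 : T) B r : r < 0 -> (forall c, Rabs (f c) <= B) ->
  r * Sup f = Inf (fun c => r * f c).
Proof.
  intros Hr HB. unfold Inf.
  rewrite (Sup_ext (fun a => - (r * f a)) (fun a => - r * f a)) by (intros; ring).
  rewrite <- (Sup_scale f c0 B); [ring|lra|].
  intros x. specialize (HB x). apply Rabs_le_between in HB. lra.
Qed.

Lemma Inf_scale_neg f (c0 : T) B r : r < 0 -> (forall c, Rabs (f c) <= B) ->
  r * Inf f = Sup (fun c => r * f c).
Proof.
  intros Hr HB. unfold Inf.
  rewrite (Sup_ext (fun a => r * f a) (fun a => - r * - f a)) by (intros; ring).
  rewrite <- (Sup_scale (fun a => - f a) c0 B); [ring|lra|].
  intros x. specialize (HB x). apply Rabs_le_between in HB. lra.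
Qed.

End SupInf.

Lemma Sup_swap {T U : Type} (F : T -> U -> R) (c0 : T) (d0 : U) B :
  (forall c d, F c d <= B) ->
  Sup (fun c => Sup (fun d => F c d)) = Sup (fun d => Sup (fun c => F c d)).
Proof.
  intros HB.
  assert (Hd : forall c, Sup (fun d => F c d) <= B) by (intros c; now apply (Sup_lub _ d0)).
  assert (Hc : forall d, Sup (fun c => F c d) <= B) by (intros d; now apply (Sup_lub _ c0)).
  apply Rle_antisym.
  - apply (Sup_lub _ c0). intros c. apply (Sup_lub _ d0). intros d.
    apply Rle_trans with (Sup (fun c => F c d)); [now apply (Sup_ub (fun c => F c d) B)|].
    now apply (Sup_ub (fun d => Sup (fun c => F c d)) B).
  - apply (Sup_lub _ d0). intros d. apply (Sup_lub _ c0). intros c.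
    apply Rle_trans with (Sup (fun d => F c d)); [now apply (Sup_ub (fun d => F c d) B)|].
    now apply (Sup_ub (fun c => Sup (fun d => F c d)) B).
Qed.

Lemma Sup_comp_cofinal {T U : Type} (f : U -> R) (g : T -> U) (c0 : T) B :
  (forall c, f c <= B) -> (forall c, exists m, f c <= f (g m)) ->
  Sup f = Sup (fun m => f (g m)).
Proof.
  intros HB Hcof. apply Rle_antisym.
  - apply (Sup_lub _ (g c0)). intros c. destruct (Hcof c) as [m Hm].
    eapply Rle_trans; [exact Hm|]. now apply (Sup_ub (fun m => f (g m)) B).
  - apply (Sup_lub _ c0). intros m. now apply (Sup_ub f B).
Qed.

Lemma Inf_comp_cofinal {T U : Type} (f : U -> R) (g : T -> U) (c0 : T) B :
  (forall c, B <= f c) -> (forall c, exists m, f (g m) <= f c) ->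
  Inf f = Inf (fun m => f (g m)).
Proof.
  intros HB Hcof. unfold Inf. f_equal.
  apply (Sup_comp_cofinal (fun c => - f c) g c0 (- B)).
  - intros c. specialize (HB c). lra.
  - intros c. destruct (Hcof c) as [m Hm]. exists m. lra.
Qed.

Section Valuations.
Context {K : LStr}.

Lemma dist_nonneg (x y : K) : 0 <= dist x y.
Proof.
  pose proof (dist_tri K x y x) as H. rewrite (dist_sym K y x) in H.
  assert (dist x x = 0) by now apply (dist_eq0 K). lra.
Qed.

Lemma upd_same (rho : nat -> K) v c : upd rho v c v = c.
Proof. unfold upd. now rewrite Nat.eqb_refl. Qed.

Lemma upd_other (rho : nat -> K) v c w : w <> v -> upd rho v c w = rho w.
Proof. intros H. unfold upd. now destruct (Nat.eqb_spec w v). Qed.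

Lemma upd_comm (rho : nat -> K) v w a b : v <> w ->
  upd (upd rho v a) w b = upd (upd rho w b) v a.
Proof.
  intros H. apply functional_extensionality. intros n. unfold upd.
  destruct (Nat.eqb_spec n w), (Nat.eqb_spec n v); congruence.
Qed.

Lemma upd_shadow (rho : nat -> K) v a b : upd (upd rho v a) v b = upd rho v b.
Proof.
  apply functional_extensionality. intros n. unfold upd. now destruct (Nat.eqb n v).
Qed.

End Valuations.

Fixpoint fbound (phi : formula) : R :=
  match phi with
  | fone | fdist _ _ => 1
  | fplus a b => fbound a + fbound b
  | fscale r a => Rabs r * fbound a
  | fsup _ a | finf _ a | fbsup _ _ a | fbinf _ _ a => fbound a
  end.

Lemma feval_bound (K : LStr) phi (rho : nat -> K) : Rabs (feval rho phi) <= fbound phi.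
Proof.
  revert rho. induction phi; intros rho; simpl.
  - rewrite Rabs_R1. lra.
  - rewrite Rabs_pos_eq by apply dist_nonneg. apply dist_le1.
  - eapply Rle_trans; [apply Rabs_triang|]. specialize (IHphi1 rho). specialize (IHphi2 rho). lra.
  - rewrite Rabs_mult. apply Rmult_le_compat_l; [apply Rabs_pos|auto].
  - now apply (Sup_abs _ s_zero).
  - now apply (Inf_abs _ s_zero).
  - now apply (Sup_abs _ s_zero).
  - now apply (Inf_abs _ s_zero).
Qed.

Lemma feval_ub (K : LStr) phi (rho : nat -> K) : feval rho phi <= fbound phi.
Proof. pose proof (feval_bound K phi rho) as H. apply Rabs_le_between in H. lra. Qed.

Lemma feval_lb (K : LStr) phi (rho : nat -> K) : - fbound phi <= feval rho phi.
Proof. pose proof (feval_bound K phi rho) as H. apply Rabs_le_between in H. lra. Qed.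

(* Constrains bound as well as free variables. *)
Fixpoint tvars_in (P : nat -> Prop) (t : term) : Prop :=
  match t with
  | tvar n => P n
  | tzero | tone => True
  | tadd a b | tmul a b | tmeet a b | tjoin a b => tvars_in P a /\ tvars_in P b
  end.

Fixpoint vars_in (P : nat -> Prop) (phi : formula) : Prop :=
  match phi with
  | fone => True
  | fdist t u => tvars_in P t /\ tvars_in P u
  | fplus a b => vars_in P a /\ vars_in P b
  | fscale _ a => vars_in P a
  | fsup x a | finf x a => P x /\ vars_in P a
  | fbsup x t a | fbinf x t a => P x /\ tvars_in P t /\ vars_in P a
  end.

Lemma tvars_in_nocc P t v : tvars_in P t -> ~ P v -> t_occ v t = false.
Proof.
  induction t; simpl; intros H Hv; try reflexivity;
    try (destruct H; rewrite IHt1, IHt2 by auto; reflexivity).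
  destruct (Nat.eqb_spec n v); congruence.
Qed.

Lemma vars_in_nocc P phi v : vars_in P phi -> ~ P v -> f_occ v phi = false.
Proof.
  induction phi; simpl; intros H Hv; repeat match goal with H : _ /\ _ |- _ => destruct H end;
    repeat first [rewrite (tvars_in_nocc P) by auto | rewrite IHphi by auto
                 | rewrite IHphi1 by auto | rewrite IHphi2 by auto];
    now rewrite ?andb_false_r.
Qed.

Lemma tvars_in_impl (P Q : nat -> Prop) t : (forall v, P v -> Q v) -> tvars_in P t -> tvars_in Q t.
Proof. induction t; simpl; intuition. Qed.

Lemma vars_in_impl (P Q : nat -> Prop) phi : (forall v, P v -> Q v) -> vars_in P phi -> vars_in Q phi.
Proof. induction phi; simpl; intuition eauto using tvars_in_impl. Qed.

Section Independence.
Variable K : LStr.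

Lemma teval_upd_nocc t v (rho : nat -> K) c : t_occ v t = false -> teval (upd rho v c) t = teval rho t.
Proof.
  induction t; simpl; intros H; try reflexivity;
    try (apply orb_false_iff in H as [H1 H2]; now rewrite IHt1, IHt2).
  unfold upd. now rewrite H.
Qed.

Lemma feval_upd_nocc phi v (rho : nat -> K) c : f_occ v phi = false ->
  feval (upd rho v c) phi = feval rho phi.
Proof.
  revert rho. induction phi; simpl; intros rho H;
    repeat match goal with H : (_ || _)%bool = false |- _ => apply orb_false_iff in H as [? ?] end.
  - reflexivity.
  - now rewrite !teval_upd_nocc.
  - now rewrite IHphi1, IHphi2.
  - now rewrite IHphi.
  - apply Sup_ext. intros d. destruct (Nat.eqb_spec v x).
    + subst. now rewrite upd_shadow.
    + rewrite upd_comm by auto. now apply IHphi.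
  - apply Inf_ext. intros d. destruct (Nat.eqb_spec v x).
    + subst. now rewrite upd_shadow.
    + rewrite upd_comm by auto. now apply IHphi.
  - apply Sup_ext. intros d. rewrite teval_upd_nocc by auto. destruct (Nat.eqb_spec v x).
    + subst. now rewrite upd_shadow.
    + rewrite upd_comm by auto. now apply IHphi.
  - apply Inf_ext. intros d. rewrite teval_upd_nocc by auto. destruct (Nat.eqb_spec v x).
    + subst. now rewrite upd_shadow.
    + rewrite upd_comm by auto. now apply IHphi.
Qed.

End Independence.

(* Replaces [y] by [y meet s]; bounded quantifiers are left untouched, so this is only
   meaningful on affine formulas. *)
Fixpoint tmeet_var (y s : nat) (t : term) : term :=
  match t with
  | tvar n => if Nat.eqb n y then tmeet (tvar y) (tvar s) else tvar n
  | tzero => tzero | tone => tone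
  | tadd a b => tadd (tmeet_var y s a) (tmeet_var y s b)
  | tmul a b => tmul (tmeet_var y s a) (tmeet_var y s b)
  | tmeet a b => tmeet (tmeet_var y s a) (tmeet_var y s b)
  | tjoin a b => tjoin (tmeet_var y s a) (tmeet_var y s b)
  end.

Fixpoint fmeet_var (y s : nat) (phi : formula) : formula :=
  match phi with
  | fone => fone
  | fdist t u => fdist (tmeet_var y s t) (tmeet_var y s u)
  | fplus a b => fplus (fmeet_var y s a) (fmeet_var y s b)
  | fscale r a => fscale r (fmeet_var y s a)
  | fsup z a => if Nat.eqb z y then fsup z a else fsup z (fmeet_var y s a)
  | finf z a => if Nat.eqb z y then finf z a else finf z (fmeet_var y s a)
  | _ => phi
  end.

Lemma teval_tmeet_var (K : LStr) y s t (rho : nat -> K) :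
  teval rho (tmeet_var y s t) = teval (upd rho y (s_meet (rho y) (rho s))) t.
Proof.
  induction t; simpl; try reflexivity; try now rewrite IHt1, IHt2.
  unfold upd. destruct (Nat.eqb_spec n y); subst; simpl; now rewrite ?Nat.eqb_refl.
Qed.

Lemma feval_fmeet_var (K : LStr) y s phi (rho : nat -> K) :
  is_affine phi = true -> vars_in (fun v => v <> s) phi ->
  feval rho (fmeet_var y s phi) = feval (upd rho y (s_meet (rho y) (rho s))) phi.
Proof.
  revert rho. induction phi; simpl; intros rho Ha Hv; try discriminate.
  - reflexivity.
  - now rewrite !teval_tmeet_var.
  - apply andb_true_iff in Ha as [Ha1 Ha2]. destruct Hv. now rewrite IHphi1, IHphi2.
  - now rewrite IHphi.
  - destruct Hv as [Hx Hv]. destruct (Nat.eqb_spec x y); simpl; apply Sup_ext; intros d.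
    + subst. now rewrite upd_shadow.
    + rewrite IHphi by auto. rewrite !upd_other, upd_comm by lia. reflexivity.
  - destruct Hv as [Hx Hv]. destruct (Nat.eqb_spec x y); simpl; apply Inf_ext; intros d.
    + subst. now rewrite upd_shadow.
    + rewrite IHphi by auto. rewrite !upd_other, upd_comm by lia. reflexivity.
Qed.

Lemma tvars_in_tmeet_var P y s t : tvars_in P t -> P s -> tvars_in P (tmeet_var y s t).
Proof.
  induction t; simpl; intuition. destruct (Nat.eqb_spec n y); subst; simpl; auto.
Qed.

Lemma vars_in_fmeet_var P y s phi : vars_in P phi -> P s -> vars_in P (fmeet_var y s phi).
Proof.
  induction phi; simpl; intuition auto using tvars_in_tmeet_var;
    destruct (Nat.eqb x y); simpl; auto.
Qed.

Lemma affine_fmeet_var y s phi : is_affine phi = true -> is_affine (fmeet_var y s phi) = true.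
Proof.
  induction phi; simpl; intros H; auto; try discriminate.
  - apply andb_true_iff in H as [H1 H2]. now rewrite IHphi1, IHphi2.
  - destruct (Nat.eqb x y); simpl; auto.
  - destruct (Nat.eqb x y); simpl; auto.
Qed.

Fixpoint prenex (pre : list (bool * nat)) (th : formula) : formula :=
  match pre with
  | nil => th
  | (b, v) :: r => if b then fsup v (prenex r th) else finf v (prenex r th)
  end.

Definition equiv_in (K : LStr) (phi psi : formula) : Prop :=
  forall rho : nat -> K, feval rho phi = feval rho psi.

Definition indep (K : LStr) (v : nat) (th : formula) : Prop :=
  forall (rho : nat -> K) c, feval (upd rho v c) th = feval rho th.

Definition monotone_in (K : LStr) (b : bool) (v : nat) (th : formula) : Prop :=
  forall (rho : nat -> K) c c', le K c c' ->
    if b then feval (upd rho v c) th <= feval (upd rho v c') th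
    else feval (upd rho v c') th <= feval (upd rho v c) th.

Definition scale_prefix (r : R) (pre : list (bool * nat)) : list (bool * nat) :=
  if Rlt_dec r 0 then map (fun p => (negb (fst p), snd p)) pre else pre.

Lemma prenex_app p1 p2 th : prenex (p1 ++ p2) th = prenex p1 (prenex p2 th).
Proof. induction p1 as [|[b v] p1 IH]; simpl; now rewrite ?IH. Qed.

Lemma affine_prenex pre th : is_affine th = true -> is_affine (prenex pre th) = true.
Proof. induction pre as [|[[|] v] p IH]; simpl; auto. Qed.

Lemma prenex_nocc pre th v : f_occ v th = false -> f_occ v (prenex pre th) = false.
Proof.
  induction pre as [|[[|] w] p IH]; simpl; intros H; auto; now rewrite IH, andb_false_r.
Qed.

Lemma map_snd_scale_prefix r pre : map snd (scale_prefix r pre) = map snd pre.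
Proof. unfold scale_prefix. destruct (Rlt_dec r 0); auto. now rewrite map_map. Qed.

Lemma in_scale_prefix r pre b v : In (b, v) (scale_prefix r pre) ->
  exists b0, In (b0, v) pre /\ b = (if Rlt_dec r 0 then negb b0 else b0).
Proof.
  unfold scale_prefix. destruct (Rlt_dec r 0); intros H.
  - apply in_map_iff in H as [[b0 v0] [Heq Hin]]. injection Heq as <- <-. now exists b0.
  - now exists b.
Qed.

Lemma indep_of_equiv (K : LStr) X Y v : equiv_in K X Y -> f_occ v Y = false -> indep K v X.
Proof. intros H Hf rho c. rewrite !H. now apply feval_upd_nocc. Qed.

Lemma monotone_plus_l (K : LStr) b v X Y :
  monotone_in K b v X -> indep K v Y -> monotone_in K b v (fplus X Y).
Proof.
  intros H HY rho c c' Hle. specialize (H rho c c' Hle). simpl. rewrite !HY. destruct b; lra.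
Qed.

Lemma monotone_plus_r (K : LStr) b v X Y :
  monotone_in K b v Y -> indep K v X -> monotone_in K b v (fplus X Y).
Proof.
  intros H HX rho c c' Hle. specialize (H rho c c' Hle). simpl. rewrite !HX. destruct b; lra.
Qed.

Lemma monotone_scale (K : LStr) r b v th : monotone_in K b v th ->
  monotone_in K (if Rlt_dec r 0 then negb b else b) v (fscale r th).
Proof.
  intros H rho c c' Hle. specialize (H rho c c' Hle). simpl.
  destruct (Rlt_dec r 0), b; simpl in *; nra.
Qed.

Section Prenex.
Variable K : LStr.

Lemma prenex_congr pre X Y : equiv_in K X Y -> equiv_in K (prenex pre X) (prenex pre Y).
Proof.
  intros H. induction pre as [|[[|] w] p IH]; simpl; intros rho; auto.
  - apply Sup_ext. intros. apply IH.
  - apply Inf_ext. intros. apply IH.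
Qed.

Lemma monotone_prenex b v th pre : monotone_in K b v th -> ~ In v (map snd pre) ->
  monotone_in K b v (prenex pre th).
Proof.
  intros H. induction pre as [|[q w] p IH]; simpl; intros Hn; auto.
  assert (Hw : w <> v) by tauto.
  intros rho c c' Hle.
  assert (Hd : forall d, if b then feval (upd (upd rho v c) w d) (prenex p th) <=
                                  feval (upd (upd rho v c') w d) (prenex p th)
                        else feval (upd (upd rho v c') w d) (prenex p th) <=
                             feval (upd (upd rho v c) w d) (prenex p th)).
  { intros d. rewrite !(upd_comm _ v w) by auto. exact (IH ltac:(tauto) (upd rho w d) c c' Hle). }
  destruct q, b; simpl;
    [apply (Sup_le _ _ s_zero (fbound (prenex p th))) | apply (Sup_le _ _ s_zero (fbound (prenex p th)))
    |apply (Inf_le _ _ s_zero (- fbound (prenex p th))) | apply (Inf_le _ _ s_zero (- fbound (prenex p th)))];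
    auto using feval_ub, feval_lb.
Qed.

Lemma prenex_plus_l pre X Y : (forall v, In v (map snd pre) -> indep K v Y) ->
  equiv_in K (fplus (prenex pre X) Y) (prenex pre (fplus X Y)).
Proof.
  induction pre as [|[q w] p IH]; simpl; intros HI rho; auto.
  specialize (IH (fun v Hv => HI v (or_intror Hv))).
  destruct q; simpl.
  - rewrite <- (Sup_plus_r _ s_zero (fbound (prenex p X))) by (intros; apply feval_ub).
    apply Sup_ext. intros d. rewrite <- IH. simpl. now rewrite (HI w (or_introl eq_refl)).
  - rewrite <- (Inf_plus_r _ s_zero (- fbound (prenex p X))) by (intros; apply feval_lb).
    apply Inf_ext. intros d. rewrite <- IH. simpl. now rewrite (HI w (or_introl eq_refl)).
Qed.

Lemma prenex_plus_r pre X Y : (forall v, In v (map snd pre) -> indep K v X) ->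
  equiv_in K (fplus X (prenex pre Y)) (prenex pre (fplus X Y)).
Proof.
  intros HI rho. transitivity (feval rho (fplus (prenex pre Y) X)); [simpl; ring|].
  rewrite (prenex_plus_l pre Y X HI rho). apply prenex_congr. intros r. simpl. ring.
Qed.

Lemma prenex_scale r pre X :
  equiv_in K (fscale r (prenex pre X)) (prenex (scale_prefix r pre) (fscale r X)).
Proof.
  unfold scale_prefix. destruct (Rlt_dec r 0) as [Hr|Hr];
    induction pre as [|[[|] w] p IH]; simpl; intros rho; auto; cbn [feval].
  - rewrite (Sup_scale_neg _ s_zero (fbound (prenex p X))) by (auto; intros; apply feval_bound).
    apply Inf_ext. intros. apply IH.
  - rewrite (Inf_scale_neg _ s_zero (fbound (prenex p X))) by (auto; intros; apply feval_bound).
    apply Sup_ext. intros. apply IH.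
  - rewrite (Sup_scale _ s_zero (fbound (prenex p X))) by (try lra; intros; apply feval_ub).
    apply Sup_ext. intros. apply IH.
  - rewrite (Inf_scale _ s_zero (- fbound (prenex p X))) by (try lra; intros; apply feval_lb).
    apply Inf_ext. intros. apply IH.
Qed.

End Prenex.

Record meet_semilattice (K : LStr) : Prop := {
  meet_idem : forall x : K, s_meet x x = x;
  meet_assoc : forall x y z : K, s_meet x (s_meet y z) = s_meet (s_meet x y) z
}.

Lemma AA0_meet_semilattice (K : LStr) : AA0 K -> meet_semilattice K.
Proof. intros HA. split; [apply (A1_meet_idem K HA) | apply (A1_meet_assoc K HA)]. Qed.

Section BoundedSup.
Variable K : LStr.
Hypothesis HK : meet_semilattice K.

Lemma le_meet_r (d e : K) : le K (s_meet d e) e.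
Proof. unfold le. now rewrite <- (meet_assoc K HK), (meet_idem K HK). Qed.

Lemma meet_le_absorb (d s s' : K) : le K s s' -> s_meet (s_meet d s) s' = s_meet d s.
Proof. unfold le. intros H. now rewrite <- (meet_assoc K HK), H. Qed.

Lemma Sup_meet_split (F : K -> R) B : (forall c, F c <= B) ->
  Sup F = Sup (fun e => Sup (fun d => F (s_meet d e))).
Proof.
  intros HB.
  assert (Hd : forall e, Sup (fun d => F (s_meet d e)) <= B) by (intros e; now apply (Sup_lub _ s_zero)).
  apply Rle_antisym.
  - apply (Sup_lub _ s_zero). intros c.
    apply Rle_trans with (Sup (fun d => F (s_meet d c))).
    + rewrite <- (meet_idem K HK c) at 1. now apply (Sup_ub (fun d => F (s_meet d c)) B).
    + now apply (Sup_ub (fun e => Sup (fun d => F (s_meet d e))) B).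
  - apply (Sup_lub _ s_zero). intros e. apply (Sup_lub _ s_zero). intros d. now apply (Sup_ub F B).
Qed.

Lemma Sup_meet_attained (F : K -> R) e : (forall d, F (s_meet d e) <= F e) ->
  Sup (fun d => F (s_meet d e)) = F e.
Proof.
  intros H. rewrite (Sup_attained _ e); [now rewrite (meet_idem K HK)|].
  intros d. rewrite (meet_idem K HK). apply H.
Qed.

Lemma sup_split_bsup y s X : y <> s -> f_occ s X = false ->
  equiv_in K (fsup y X) (fsup s (fbsup y (tvar s) X)).
Proof.
  intros Hys Hs rho. cbn [feval teval].
  rewrite (Sup_meet_split _ (fbound X)) by (intros; apply feval_ub).
  apply Sup_ext. intros e. apply Sup_ext. intros d.
  rewrite upd_same, <- upd_comm by auto. symmetry. now apply feval_upd_nocc.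
Qed.

Lemma bsup_twin y s m a : y <> s -> is_affine a = true -> vars_in (fun v => v <> s) a ->
  equiv_in K m a -> equiv_in K (fbsup y (tvar s) m) (fsup y (fmeet_var y s a)).
Proof.
  intros Hys Ha Hv Hma rho. cbn [feval teval]. apply Sup_ext. intros c.
  rewrite feval_fmeet_var by auto.
  rewrite upd_same, upd_other, upd_shadow by auto. apply Hma.
Qed.

Lemma bsup_monotone_bound y s m : y <> s -> indep K s m ->
  monotone_in K true s (fbsup y (tvar s) m).
Proof.
  intros Hys Hind rho c c' Hle. cbn [feval teval]. rewrite !upd_same.
  apply (Sup_lub _ s_zero). intros d.
  apply Rle_trans with (feval (upd (upd rho s c') y (s_meet (s_meet d c) c')) m).
  - rewrite meet_le_absorb, !(upd_comm _ s y), !Hind by auto. lra.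
  - apply (Sup_ub (fun d => feval (upd (upd rho s c') y (s_meet d c')) m) (fbound m)).
    intros; apply feval_ub.
Qed.

Lemma bsup_monotone b v y s m : v <> y -> v <> s -> monotone_in K b v m ->
  monotone_in K b v (fbsup y (tvar s) m).
Proof.
  intros Hvy Hvs Hm rho c c' Hle. cbn [feval teval]. rewrite !upd_other by auto.
  assert (Hd : forall d, if b then feval (upd (upd rho v c) y (s_meet d (rho s))) m <=
                                  feval (upd (upd rho v c') y (s_meet d (rho s))) m
                        else feval (upd (upd rho v c') y (s_meet d (rho s))) m <=
                             feval (upd (upd rho v c) y (s_meet d (rho s))) m).
  { intros d. rewrite !(upd_comm _ v y) by auto. exact (Hm _ c c' Hle). }
  destruct b; apply (Sup_le _ _ s_zero (fbound m)); auto using feval_ub.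
Qed.

End BoundedSup.

Section CollectionConsequences.
Variable K : LStr.
Hypothesis HK : meet_semilattice K.
Hypothesis HC : Collection K.

(* Collection with a single unbounded variable [v]; monotonicity in [v] makes the
   bounded [sup_{v <= sc}] of the axiom attained at [v = sc]. *)
Lemma binf_sup_comm A x t sc v :
  is_affine A = true -> NoDup (x :: t :: sc :: v :: nil) ->
  f_occ t A = false -> f_occ sc A = false -> monotone_in K true v A ->
  equiv_in K (fbinf x (tvar t) (fsup v A)) (fsup v (fbinf x (tvar t) A)).
Proof.
  intros Ha Hnd Ht Hsc Hm rho.
  assert (Hdist : x <> t /\ x <> sc /\ x <> v /\ t <> sc /\ t <> v /\ sc <> v)
    by (rewrite !NoDup_cons_iff in Hnd; simpl in Hnd; intuition subst; intuition).
  destruct Hdist as (Hxt & Hxsc & Hxv & Htsc & Htv & Hscv).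
  pose proof (HC A x t sc (v :: nil) Ha Hnd Ht Hsc rho) as Hcoll.
  unfold coll_lhs, coll_rhs in Hcoll. cbn [fold_right feval teval] in Hcoll |- *.
  rewrite Hcoll. apply Sup_ext. intros e. apply Inf_ext. intros c.
  rewrite !upd_other, upd_same by auto.
  rewrite (Sup_meet_attained K HK (fun d => feval (upd (upd (upd rho sc e) x (s_meet c (rho t))) v d) A)).
  - rewrite (upd_other _ _ _ t), (upd_comm rho sc x), (upd_comm _ sc v), feval_upd_nocc by auto.
    now rewrite upd_comm by auto.
  - intros d. apply (Hm _ _ _ (le_meet_r K HK d e)).
Qed.

Lemma bsup_inf_comm G A y s sc v :
  is_affine A = true -> equiv_in K G A -> f_occ s A = false -> f_occ sc A = false ->
  NoDup (y :: s :: sc :: v :: nil) -> monotone_in K false v G ->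
  equiv_in K (fbsup y (tvar s) (finf v G)) (finf v (fbsup y (tvar s) G)).
Proof.
  intros Ha HGA Hs Hsc Hnd Hm rho.
  assert (HmA : monotone_in K true v (fscale (-1) A)).
  { intros r c c' Hle. specialize (Hm r c c' Hle). simpl. rewrite <- !HGA. lra. }
  pose proof (binf_sup_comm (fscale (-1) A) y s sc v Ha Hnd Hs Hsc HmA rho) as Hcomm.
  transitivity (- feval rho (fbinf y (tvar s) (fsup v (fscale (-1) A)))).
  - cbn [feval teval]. unfold Inf. rewrite Ropp_involutive.
    apply Sup_ext. intros c. f_equal. apply Sup_ext. intros d. rewrite HGA. ring.
  - rewrite Hcomm. cbn [feval teval]. unfold Inf. f_equal.
    apply Sup_ext. intros d. f_equal. apply Sup_ext. intros c. rewrite HGA. ring.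
Qed.

Lemma bsup_prenex_comm y s sc pre th al :
  is_affine al = true -> equiv_in K th al -> f_occ s al = false -> f_occ sc al = false ->
  NoDup (map snd pre) -> (forall v, In v (map snd pre) -> v <> y /\ v <> s /\ v <> sc) ->
  y <> s -> y <> sc -> s <> sc -> (forall b v, In (b, v) pre -> monotone_in K b v th) ->
  equiv_in K (fbsup y (tvar s) (prenex pre th)) (prenex pre (fbsup y (tvar s) th)).
Proof.
  intros Ha Heq Hs Hsc. induction pre as [|[q w] p IH]; intros Hnd Hv Hys Hysc Hssc Hm rho;
    [reflexivity|].
  simpl in Hnd. inversion Hnd as [|? ? Hnin Hnd']. subst.
  destruct (Hv w (or_introl eq_refl)) as [Hwy [Hws Hwsc]].
  assert (IH' : equiv_in K (fbsup y (tvar s) (prenex p th)) (prenex p (fbsup y (tvar s) th)))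
    by (apply IH; auto; intros; [apply Hv | apply Hm]; simpl; auto).
  destruct q; cbn [prenex].
  - cbn [feval teval].
    rewrite (Sup_swap (fun c d => feval (upd (upd rho y (s_meet c (rho s))) w d) (prenex p th))
               s_zero s_zero (fbound (prenex p th))) by (intros; apply feval_ub).
    apply Sup_ext. intros d. rewrite <- IH'. cbn [feval teval].
    apply Sup_ext. intros c. now rewrite (upd_other _ _ _ s), upd_comm by auto.
  - rewrite (bsup_inf_comm (prenex p th) (prenex p al) y s sc w).
    + cbn [feval]. apply Inf_ext. intros d. apply IH'.
    + now apply affine_prenex.
    + now apply prenex_congr.
    + now apply prenex_nocc.
    + now apply prenex_nocc.
    + repeat constructor; simpl; intuition.
    + apply monotone_prenex; auto. apply Hm. simpl; auto.
Qed.

End CollectionConsequences.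

Section Transfer.
Variables M N : LStr.
Variable e : Embedding M N.
Hypothesis Hcof : Cofinal e.
Hypothesis HS : Sigma0_elementary e.

Lemma emb_upd (rho : nat -> M) w m : (fun n => e (upd rho w m n)) = upd (fun n => e (rho n)) w (e m).
Proof. apply functional_extensionality. intros n. unfold upd. now destruct (Nat.eqb n w). Qed.

Lemma prenex_transfer pre th : is_Sigma0 th = true -> NoDup (map snd pre) ->
  (forall b v, In (b, v) pre -> monotone_in N b v th) ->
  forall rho : nat -> M, feval rho (prenex pre th) = feval (fun n => e (rho n)) (prenex pre th).
Proof.
  intros Hth. induction pre as [|[q w] p IH]; intros Hnd Hm rho; [now apply HS|].
  simpl in Hnd. inversion Hnd as [|? ? Hnin Hnd']. subst.
  assert (Hmw : monotone_in N q w (prenex p th))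
    by (apply monotone_prenex; auto; apply Hm; simpl; auto).
  assert (IH' : forall m, feval (upd rho w m) (prenex p th) =
                         feval (upd (fun n => e (rho n)) w (e m)) (prenex p th)).
  { intros m. rewrite <- emb_upd. apply IH; auto. intros; apply Hm; simpl; auto. }
  set (f := fun c => feval (upd (fun n => e (rho n)) w c) (prenex p th)).
  destruct q; cbn [prenex feval].
  - rewrite (Sup_ext _ _ IH').
    symmetry. apply (Sup_comp_cofinal f e s_zero (fbound (prenex p th))); [intros; apply feval_ub|].
    intros c. destruct (Hcof c) as [m Hle]. exists m. exact (Hmw _ c (e m) Hle).
  - rewrite (Inf_ext _ _ IH').
    symmetry. apply (Inf_comp_cofinal f e s_zero (- fbound (prenex p th))); [intros; apply feval_lb|].
    intros c. destruct (Hcof c) as [m Hle]. exists m. exact (Hmw _ c (e m) Hle).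
Qed.

End Transfer.

Record prenex_sem (K : LStr) (phi : formula) (pre : list (bool * nat)) (m a : formula) : Prop := {
  ps_twin : equiv_in K m a;
  ps_prenex : equiv_in K phi (prenex pre m);
  ps_monotone : forall b v, In (b, v) pre -> monotone_in K b v m
}.

(* The Sigma_0 matrix [m] comes with an equivalent affine twin [a], to which the
   collection axioms can be applied.  The variables of [phi] are below [B0]; the
   prefix variables are fresh ones drawn from [n, n'). *)
Record prenex_form (B0 : nat) (phi : formula) (pre : list (bool * nat)) (m a : formula)
    (n n' : nat) : Prop := {
  pf_le : (n <= n')%nat;
  pf_matrix : is_Sigma0 m = true;
  pf_twin : is_affine a = true;
  pf_NoDup : NoDup (map snd pre);
  pf_range : forall v, In v (map snd pre) -> (n <= v < n')%nat;
  pf_twin_vars : vars_in (fun v => v < B0 \/ n <= v < n')%nat a;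
  pf_sem : forall K, meet_semilattice K -> Collection K -> prenex_sem K phi pre m a
}.

Section PrenexForm.
Variable B0 : nat.

Lemma prenex_form_atom phi n : (phi = fone \/ exists t u, phi = fdist t u) ->
  vars_in (fun v => v < B0)%nat phi -> prenex_form B0 phi nil phi phi n n.
Proof.
  intros Hphi Hv. split; simpl; try tauto.
  - lia.
  - destruct Hphi as [->|[t [u ->]]]; reflexivity.
  - destruct Hphi as [->|[t [u ->]]]; reflexivity.
  - constructor.
  - eapply vars_in_impl; [|exact Hv]. simpl. lia.
  - intros K _ _. split; simpl; try tauto; intros rho; reflexivity.
Qed.

Lemma prenex_form_plus a b pa ma aa pb mb ab n n1 n2 :
  vars_in (fun v => v < B0)%nat a -> vars_in (fun v => v < B0)%nat b -> (B0 <= n)%nat ->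
  prenex_form B0 a pa ma aa n n1 -> prenex_form B0 b pb mb ab n1 n2 ->
  prenex_form B0 (fplus a b) (pa ++ pb) (fplus ma mb) (fplus aa ab) n n2.
Proof.
  intros Hva Hvb HB [Hle1 Hm1 Ht1 Hnd1 Hr1 Hv1 Hs1] [Hle2 Hm2 Ht2 Hnd2 Hr2 Hv2 Hs2]. split.
  - lia.
  - simpl. now rewrite Hm1, Hm2.
  - simpl. now rewrite Ht1, Ht2.
  - rewrite map_app. apply NoDup_app; auto.
    intros v H1 H2. apply Hr1 in H1. apply Hr2 in H2. lia.
  - intros v. rewrite map_app. intros [H|H]%in_app_or;
      [apply Hr1 in H | apply Hr2 in H]; lia.
  - simpl. split; (eapply vars_in_impl; [|eassumption]); simpl; lia.
  - intros K HK HC. destruct (Hs1 K HK HC) as [Ea Pa Ma], (Hs2 K HK HC) as [Eb Pb Mb].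
    assert (Ib : forall v, In v (map snd pa) -> indep K v (prenex pb mb)).
    { intros v Hv. apply (indep_of_equiv K _ b); [intros rho; now rewrite Pb|].
      apply (vars_in_nocc _ _ _ Hvb). apply Hr1 in Hv. lia. }
    assert (Ia : forall v, In v (map snd pb) -> indep K v ma).
    { intros v Hv. apply (indep_of_equiv K _ aa); auto.
      apply (vars_in_nocc _ _ _ Hv1). apply Hr2 in Hv. lia. }
    assert (Ib' : forall v, In v (map snd pa) -> indep K v mb).
    { intros v Hv. apply (indep_of_equiv K _ ab); auto.
      apply (vars_in_nocc _ _ _ Hv2). apply Hr1 in Hv. lia. }
    split.
    + intros rho. simpl. now rewrite Ea, Eb.
    + intros rho. transitivity (feval rho (fplus (prenex pa ma) (prenex pb mb))).
      { simpl. now rewrite Pa, Pb. }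
      rewrite (prenex_plus_l K pa ma (prenex pb mb) Ib rho), prenex_app.
      apply prenex_congr. intros r. now rewrite <- (prenex_plus_r K pb ma mb Ia r).
    + intros b0 v [Hin|Hin]%in_app_or.
      * apply monotone_plus_l; auto. apply Ib'. exact (in_map snd _ _ Hin).
      * apply monotone_plus_r; auto. apply Ia. exact (in_map snd _ _ Hin).
Qed.

Lemma prenex_form_scale r a pa ma aa n n1 : prenex_form B0 a pa ma aa n n1 ->
  prenex_form B0 (fscale r a) (scale_prefix r pa) (fscale r ma) (fscale r aa) n n1.
Proof.
  intros [Hle Hm Ht Hnd Hr Hv Hs]. split; auto.
  - now rewrite map_snd_scale_prefix.
  - intros v. rewrite map_snd_scale_prefix. auto.
  - intros K HK HC. destruct (Hs K HK HC) as [Ea Pa Ma]. split.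
    + intros rho. simpl. now rewrite Ea.
    + intros rho. cbn [feval]. rewrite Pa. apply prenex_scale.
    + intros b v [b0 [Hin ->]]%in_scale_prefix. now apply monotone_scale, Ma.
Qed.

Lemma prenex_form_equiv phi psi pre m a n n' : prenex_form B0 phi pre m a n n' ->
  (forall K, meet_semilattice K -> Collection K -> equiv_in K phi psi) ->
  prenex_form B0 psi pre m a n n'.
Proof.
  intros [Hle Hm Ht Hnd Hr Hv Hs] H. split; auto.
  intros K HK HC. destruct (Hs K HK HC) as [Ea Pa Ma]. split; auto.
  intros rho. rewrite <- (H K HK HC). auto.
Qed.

(* [sup_y a = sup_s sup_{y <= s} a] with [s := n1] fresh; the bounded quantifier is then pushed
   into the matrix, using [S n1] as the auxiliary variable required by collection. *)
Lemma prenex_form_sup y a pa ma aa n n1 :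
  vars_in (fun v => v < B0)%nat a -> (y < B0)%nat -> (B0 <= n)%nat ->
  prenex_form B0 a pa ma aa n n1 ->
  prenex_form B0 (fsup y a) ((true, n1) :: pa) (fbsup y (tvar n1) ma)
    (fsup y (fmeet_var y n1 aa)) n (S n1).
Proof.
  intros Hva Hy HB [Hle Hm Ht Hnd Hr Hv Hs].
  assert (Hn1 : f_occ n1 aa = false) by (apply (vars_in_nocc _ _ _ Hv); lia).
  assert (HSn1 : f_occ (S n1) aa = false) by (apply (vars_in_nocc _ _ _ Hv); lia).
  assert (Han1 : f_occ n1 a = false) by (apply (vars_in_nocc _ _ _ Hva); lia).
  assert (Haux : vars_in (fun v => v <> n1) aa)
    by (eapply vars_in_impl; [|exact Hv]; simpl; lia).
  assert (Hyn : y <> n1) by lia.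
  split.
  - lia.
  - simpl. rewrite Hm. now destruct (Nat.eqb_spec n1 y); [lia|].
  - now apply affine_fmeet_var.
  - simpl. constructor; auto. intros H. apply Hr in H. lia.
  - simpl. intros v [<-|H]; [lia|]. apply Hr in H. lia.
  - simpl. split; [lia|]. apply vars_in_fmeet_var; [|lia].
    eapply vars_in_impl; [|exact Hv]. simpl. lia.
  - intros K HK HC. destruct (Hs K HK HC) as [Ea Pa Ma].
    assert (Ims : indep K n1 ma) by now apply (indep_of_equiv K _ aa).
    split.
    + now apply bsup_twin.
    + intros rho. rewrite (sup_split_bsup K HK y n1 a) by auto.
      cbn [prenex feval]. apply Sup_ext. intros e.
      rewrite <- (bsup_prenex_comm K HK HC y n1 (S n1) pa ma aa); auto; try lia.
      * cbn [feval teval]. apply Sup_ext. intros d. apply Pa.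
      * intros v Hin. apply Hr in Hin. lia.
    + intros b v [Hin|Hin].
      * injection Hin as <- <-. now apply bsup_monotone_bound.
      * pose proof (Hr v (in_map snd _ _ Hin)).
        apply bsup_monotone; auto; lia.
Qed.

End PrenexForm.

Fixpoint tmaxv (t : term) : nat :=
  match t with
  | tvar n => n
  | tzero | tone => 0
  | tadd a b | tmul a b | tmeet a b | tjoin a b => Nat.max (tmaxv a) (tmaxv b)
  end.

Fixpoint fmaxv (phi : formula) : nat :=
  match phi with
  | fone => 0
  | fdist t u => Nat.max (tmaxv t) (tmaxv u)
  | fplus a b => Nat.max (fmaxv a) (fmaxv b)
  | fscale _ a => fmaxv a
  | fsup x a | finf x a => Nat.max x (fmaxv a)
  | fbsup x t a | fbinf x t a => Nat.max x (Nat.max (tmaxv t) (fmaxv a))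
  end.

Lemma tvars_in_tmaxv t B : (tmaxv t < B)%nat -> tvars_in (fun v => v < B)%nat t.
Proof. induction t; simpl; intros; try split; try apply IHt1; try apply IHt2; auto; lia. Qed.

Lemma vars_in_fmaxv phi B : (fmaxv phi < B)%nat -> vars_in (fun v => v < B)%nat phi.
Proof.
  induction phi; simpl; intros; auto;
    repeat split; try apply tvars_in_tmaxv; try apply IHphi; try apply IHphi1; try apply IHphi2; lia.
Qed.

Lemma prenex_form_exists B0 phi n : is_affine phi = true -> vars_in (fun v => v < B0)%nat phi ->
  (B0 <= n)%nat -> exists pre m a n', prenex_form B0 phi pre m a n n'.
Proof.
  revert n. induction phi; simpl; intros n Haf Hv Hn; try discriminate.
  - exists nil, fone, fone, n. now apply prenex_form_atom; [left|].
  - exists nil, (fdist t u), (fdist t u), n. apply prenex_form_atom; [right; eauto | exact Hv].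
  - apply andb_true_iff in Haf as [Ha1 Ha2]. destruct Hv as [Hv1 Hv2].
    destruct (IHphi1 n Ha1 Hv1 Hn) as [pa [ma [aa [n1 Ga]]]].
    destruct (IHphi2 n1 Ha2 Hv2 ltac:(destruct Ga; lia)) as [pb [mb [ab [n2 Gb]]]].
    eexists _, _, _, _. eapply prenex_form_plus; eauto.
  - destruct (IHphi n Haf Hv Hn) as [pa [ma [aa [n1 Ga]]]].
    eexists _, _, _, _. exact (prenex_form_scale B0 r _ _ _ _ _ _ Ga).
  - destruct Hv as [Hx Hv].
    destruct (IHphi n Haf Hv Hn) as [pa [ma [aa [n1 Ga]]]].
    eexists _, _, _, _. apply prenex_form_sup; eauto.
  - (* [inf_x phi = - sup_x (- phi)] *)
    destruct Hv as [Hx Hv].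
    destruct (IHphi n Haf Hv Hn) as [pa [ma [aa [n1 Ga]]]].
    apply (prenex_form_scale B0 (-1)), (prenex_form_sup B0 x) in Ga; auto.
    apply (prenex_form_scale B0 (-1)) in Ga.
    eexists _, _, _, _. eapply prenex_form_equiv; [exact Ga|].
    intros K _ _ rho. simpl. unfold Inf.
    rewrite (Sup_ext (fun c => -1 * feval (upd rho x c) phi) (fun c => - feval (upd rho x c) phi))
      by (intros; ring).
    ring.
Qed.

Theorem mainTheorem11 (M N : LStr) (e : Embedding M N) :
  AA0 M -> AA0 N -> Cofinal e -> Sigma0_elementary e ->
  Collection M -> Collection N -> Elementary e.
Proof.
  intros HM HN Hcof HS CM CN phi Haf rho.
  destruct (prenex_form_exists (S (fmaxv phi)) phi (S (fmaxv phi)) Haf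
              (vars_in_fmaxv phi _ (Nat.lt_succ_diag_r _)) (le_n _))
    as [pre [m [a [n' [_ Hm _ Hnd _ _ Hsem]]]]].
  destruct (Hsem M (AA0_meet_semilattice M HM) CM) as [_ PM _].
  destruct (Hsem N (AA0_meet_semilattice N HN) CN) as [_ PN MN].
  rewrite PM, PN. now apply prenex_transfer.
Qed.
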